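(* Let $\kappa>0$, $u_0>0$, and let $u$ be the solution of $\frac{d}{dr}\big(u'/\sqrt{1+u'^2}\big)=\kappa u$, $u(0)=u_0$, $u'(0)=0$. Let $a>0$ and $0\le\gamma<\pi/2$ be such that $u$ is defined on $[0,a)$ and $\sin\psi(a)=\cos\gamma$, where $\sin\psi=u'/\sqrt{1+u'^2}$ (extended continuously to $r=a$). Then $$u(a)<\frac{\cos\gamma}{\kappa a}-\frac a2\tan\gamma+\frac a{2\cos^2\gamma}\Big(\frac\pi2-\gamma\Big).$$
   Context: $u$ is the profile of a $\kappa$-cylindrical capillary surface $z=u(x)$ between vertical plates $x=\pm a$ with contact angle $\gamma$; $u(a)$ is the outer height. *)

From Stdlib Require Import Reals Lra.
From Coquelicot Require Import Coquelicot.
Open Scope R_scope.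

Definition sin_psi (du : R -> R) (r : R) : R := du r / sqrt (1 + du r ^ 2).

From Stdlib Require Import Reals Lra.
From Coquelicot Require Import Coquelicot.
Open Scope R_scope.

(* Since (sin psi)' = kappa u, the quantity cos psi + kappa u^2 / 2 is a first integral,
   so u^2 >= u0^2 and u stays positive.  Hence sin psi is increasing and convex, vanishes
   at 0 and lies strictly below its chord: sin psi(r) < k r with k = cos gamma / a.
   Therefore u'(r) < X(r) := k r / sqrt (1 - k^2 r^2), the slope of a circle of radius 1/k.
   Comparing the moments int_0^a t u'(t) dt = a u(a) - cos gamma / kappa and
   int_0^a t X(t) dt = (pi/2 - gamma - sin gamma cos gamma) / (2 k^2) gives the bound. *)

Lemma at_right_interval (p q : R) (P : R -> Prop) :
  p < q -> (forall x, p < x < q -> P x) -> at_right p P.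
Proof.
  intros Hpq HP. assert (Hd : 0 < q - p) by lra.
  exists (mkposreal _ Hd). intros y Hy Hpy. apply HP.
  change (Rabs (y - p) < q - p) in Hy. apply Rabs_def2 in Hy. lra.
Qed.

Lemma at_left_interval (p q : R) (P : R -> Prop) :
  p < q -> (forall x, p < x < q -> P x) -> at_left q P.
Proof.
  intros Hpq HP. assert (Hd : 0 < q - p) by lra.
  exists (mkposreal _ Hd). intros y Hy Hpy. apply HP.
  change (Rabs (y - q) < q - p) in Hy. apply Rabs_def2 in Hy. lra.
Qed.

Lemma filterlim_half_at_right_0 : filterlim (fun r => r / 2) (at_right 0) (at_right 0).
Proof.
  intros P [d Hd]. exists d. intros y Hy Hy0. apply Hd; [|lra].
  change (Rabs (y / 2 - 0) < d). change (Rabs (y - 0) < d) in Hy.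
  rewrite Rminus_0_r, Rabs_pos_eq in * by lra. lra.
Qed.

Lemma filterlim_le_const {T} (F : (T -> Prop) -> Prop) {FF : ProperFilter F}
  (f : T -> R) (l c : R) :
  filterlim f F (locally l) -> F (fun x => f x <= c) -> l <= c.
Proof. intros Hf Hc. exact (filterlim_le f (fun _ => c) l c Hc Hf (filterlim_const c)). Qed.

Lemma filterlim_const_le {T} (F : (T -> Prop) -> Prop) {FF : ProperFilter F}
  (f : T -> R) (l c : R) :
  filterlim f F (locally l) -> F (fun x => c <= f x) -> c <= l.
Proof. intros Hf Hc. exact (filterlim_le (fun _ => c) f c l Hc (filterlim_const c) Hf). Qed.

Lemma filterlim_Rplus {T} (F : (T -> Prop) -> Prop) {FF : Filter F} (f g : T -> R) (l m : R) :
  filterlim f F (locally l) -> filterlim g F (locally m) ->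
  filterlim (fun x => f x + g x) F (locally (l + m)).
Proof.
  intros Hf Hg.
  exact (filterlim_comp_2 f g Rplus Hf Hg (@filterlim_plus R_AbsRing R_NormedModule l m)).
Qed.

Lemma filterlim_Rmult {T} (F : (T -> Prop) -> Prop) {FF : Filter F} (f g : T -> R) (l m : R) :
  filterlim f F (locally l) -> filterlim g F (locally m) ->
  filterlim (fun x => f x * g x) F (locally (l * m)).
Proof.
  intros Hf Hg. exact (filterlim_comp_2 f g Rmult Hf Hg (@filterlim_mult R_AbsRing l m)).
Qed.

Lemma filterlim_Rabs_comp {T} (F : (T -> Prop) -> Prop) (f : T -> R) (l : R) :
  filterlim f F (locally l) -> filterlim (fun x => Rabs (f x)) F (locally (Rabs l)).
Proof. intros Hf. eapply filterlim_comp; [exact Hf | exact (filterlim_Rabs l)]. Qed.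

Lemma filterlim_id_at_right (p : R) : filterlim (fun x => x) (at_right p) (locally p).
Proof. apply (filterlim_filter_le_1 _ (filter_le_within _)), filterlim_id. Qed.

Lemma filterlim_id_at_left (p : R) : filterlim (fun x => x) (at_left p) (locally p).
Proof. apply (filterlim_filter_le_1 _ (filter_le_within _)), filterlim_id. Qed.

Lemma filterlim_comp_ex_derive {T} (F : (T -> Prop) -> Prop) (f : T -> R) (g : R -> R)
  (l : R) :
  filterlim f F (locally l) -> ex_derive g l -> filterlim (fun x => g (f x)) F (locally (g l)).
Proof.
  intros Hf Hg. eapply filterlim_comp; [exact Hf|].
  apply (@ex_derive_continuous R_AbsRing R_NormedModule), Hg.
Qed.

Lemma MVT_open (f df : R -> R) (p q x y : R) :
  p < x -> x <= y -> y < q -> (forall t, p < t < q -> is_derive f t (df t)) ->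
  exists c, x <= c <= y /\ f y - f x = df c * (y - x).
Proof.
  intros Hpx Hxy Hyq Hd.
  destruct (MVT_gen f x y df) as [c [Hc Heq]];
    rewrite ?Rmin_left, ?Rmax_right in * by lra.
  - intros t Ht. apply Hd. lra.
  - intros t Ht. apply continuity_pt_filterlim.
    apply (@ex_derive_continuous R_AbsRing R_NormedModule).
    exists (df t). apply Hd. lra.
  - exists c. split; assumption.
Qed.

Lemma derive_pos_lt (f df : R -> R) (p q : R) :
  (forall t, p < t < q -> is_derive f t (df t)) -> (forall t, p < t < q -> 0 < df t) ->
  forall x y, p < x -> x < y -> y < q -> f x < f y.
Proof.
  intros Hd Hpos x y Hpx Hxy Hyq.
  destruct (MVT_open f df p q x y) as [c [Hc Heq]]; try lra; [exact Hd|].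
  assert (0 < df c * (y - x)) by (apply Rmult_lt_0_compat; [apply Hpos|]; lra).
  lra.
Qed.

Lemma derive_zero_eq_lim_right (f : R -> R) (p q l : R) :
  (forall t, p < t < q -> is_derive f t 0) -> filterlim f (at_right p) (locally l) ->
  forall x, p < x < q -> f x = l.
Proof.
  intros Hd Hl x Hx.
  apply (filterlim_locally_unique (F := at_right p) f (f x) l); [|exact Hl].
  apply (filterlim_ext_loc (fun _ => f x)); [|apply filterlim_const].
  apply (at_right_interval p x); [lra|]. intros y Hy.
  destruct (MVT_open f (fun _ => 0) p q y x) as [c [_ Hc]]; lra || exact Hd.
Qed.

Lemma strict_decreasing_sub_limits_lt (G Phi : R -> R) (p q l m Phi_p Phi_q : R) :
  p < q ->
  (forall x y, p < x -> x < y -> y < q -> G y - Phi y < G x - Phi x) ->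
  (forall x, p < x < q -> Phi_p <= Phi x <= Phi_q) ->
  filterlim G (at_right p) (locally l) -> filterlim G (at_left q) (locally m) ->
  m - Phi_q < l - Phi_p.
Proof.
  intros Hpq Hdec HPhi Hl Hm.
  set (x := (2 * p + q) / 3). set (y := (p + 2 * q) / 3).
  assert (Hx : G x - Phi x + Phi_p <= l).
  { apply (filterlim_const_le (at_right p) G l (G x - Phi x + Phi_p) Hl).
    apply (at_right_interval p x); [unfold x; lra|]. intros z Hz.
    assert (G x - Phi x < G z - Phi z) by (apply Hdec; unfold x in *; lra).
    pose proof (HPhi z ltac:(unfold x in *; lra)). lra. }
  assert (Hy : m <= G y - Phi y + Phi_q).
  { apply (filterlim_le_const (at_left q) G m _ Hm).
    apply (at_left_interval y q); [unfold y; lra|]. intros z Hz.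
    assert (G z - Phi z < G y - Phi y) by (apply Hdec; unfold y in *; lra).
    pose proof (HPhi z ltac:(unfold y in *; lra)). lra. }
  assert (G y - Phi y < G x - Phi x) by (apply Hdec; unfold x, y; lra).
  lra.
Qed.

Definition sin_of_slope (y : R) : R := y / sqrt (1 + y ^ 2).
Definition slope_of_sin (x : R) : R := x / sqrt (1 - x ^ 2).

Lemma sqrt_1_plus_sqr_ge1 (y : R) : 1 <= sqrt (1 + y ^ 2).
Proof. rewrite <- sqrt_1 at 1. apply sqrt_le_1_alt. nra. Qed.

Lemma one_minus_sin_of_slope_sqr (y : R) : 1 - sin_of_slope y ^ 2 = / (1 + y ^ 2).
Proof.
  unfold sin_of_slope. pose proof (sqrt_1_plus_sqr_ge1 y).
  assert (Hs : sqrt (1 + y ^ 2) ^ 2 = 1 + y ^ 2) by (apply pow2_sqrt; nra).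
  unfold Rdiv. rewrite Rpow_mult_distr, pow_inv, Hs. field. nra.
Qed.

Lemma sqrt_one_minus_sin_of_slope_sqr (y : R) :
  sqrt (1 - sin_of_slope y ^ 2) = / sqrt (1 + y ^ 2).
Proof. rewrite one_minus_sin_of_slope_sqr. apply sqrt_inv. Qed.

Lemma sin_of_slope_bound (y : R) : -1 < sin_of_slope y < 1.
Proof.
  pose proof (one_minus_sin_of_slope_sqr y) as E.
  assert (0 < / (1 + y ^ 2)) by (apply Rinv_0_lt_compat; nra).
  nra.
Qed.

Lemma Rabs_sin_of_slope_le (y : R) : Rabs (sin_of_slope y) <= Rabs y.
Proof.
  unfold sin_of_slope, Rdiv. pose proof (sqrt_1_plus_sqr_ge1 y) as H1.
  rewrite Rabs_mult, Rabs_inv, (Rabs_pos_eq (sqrt _)) by lra.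
  pose proof (Rabs_pos y).
  pose proof (Rinv_le_contravar 1 _ Rlt_0_1 H1). rewrite Rinv_1 in *.
  nra.
Qed.

Lemma slope_of_sin_of_slope (y : R) : slope_of_sin (sin_of_slope y) = y.
Proof.
  unfold slope_of_sin. rewrite sqrt_one_minus_sin_of_slope_sqr.
  unfold sin_of_slope. pose proof (sqrt_1_plus_sqr_ge1 y). field. lra.
Qed.

Lemma sin_of_slope_of_sin (x : R) : -1 < x < 1 -> sin_of_slope (slope_of_sin x) = x.
Proof.
  intros Hx. unfold sin_of_slope, slope_of_sin.
  assert (Hw : 0 < sqrt (1 - x ^ 2)) by (apply sqrt_lt_R0; nra).
  assert (Hw2 : sqrt (1 - x ^ 2) ^ 2 = 1 - x ^ 2) by (apply pow2_sqrt; nra).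
  replace (1 + (x / sqrt (1 - x ^ 2)) ^ 2) with (/ sqrt (1 - x ^ 2) ^ 2)
    by (unfold Rdiv; rewrite Rpow_mult_distr, pow_inv, Hw2; field; nra).
  rewrite <- pow_inv, sqrt_pow2 by (left; apply Rinv_0_lt_compat; lra).
  field. lra.
Qed.

Lemma sin_of_slope_lt (x y : R) : x < y -> sin_of_slope x < sin_of_slope y.
Proof.
  intros Hxy.
  apply (derive_pos_lt sin_of_slope (fun t => / sqrt (1 + t ^ 2) ^ 3) (x - 1) (y + 1));
    try lra.
  - intros t _. pose proof (sqrt_1_plus_sqr_ge1 t).
    assert (Hs : sqrt (1 + t ^ 2) ^ 2 = 1 + t ^ 2) by (apply pow2_sqrt; nra).
    unfold sin_of_slope. auto_derive; replace (t * (t * 1)) with (t ^ 2) by ring.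
    + repeat split; lra || nra.
    + set (w := sqrt (1 + t ^ 2)) in *.
      transitivity ((w ^ 2 - t ^ 2) / w ^ 3); [field; lra|]. rewrite Hs. field. lra.
  - intros t _. pose proof (sqrt_1_plus_sqr_ge1 t).
    apply Rinv_0_lt_compat, pow_lt. lra.
Qed.

Lemma lt_slope_of_sin (x y : R) :
  -1 < x < 1 -> sin_of_slope y < x -> y < slope_of_sin x.
Proof.
  intros Hx Hy. destruct (Rlt_or_le y (slope_of_sin x)) as [H | [H | H]]; trivial.
  - pose proof (sin_of_slope_lt _ _ H) as Hs. rewrite sin_of_slope_of_sin in Hs by lra. lra.
  - rewrite <- H, sin_of_slope_of_sin in Hy by lra. lra.
Qed.

Lemma sin_of_slope_pos (y : R) : 0 < sin_of_slope y -> 0 < y.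
Proof.
  intros Hy. destruct (Rlt_or_le 0 y) as [H | [H | H]]; trivial.
  - pose proof (sin_of_slope_lt _ _ H).
    replace (sin_of_slope 0) with 0 in *
      by (unfold sin_of_slope; field; apply Rgt_not_eq, sqrt_lt_R0; lra).
    lra.
  - subst. unfold sin_of_slope in Hy. rewrite Rdiv_0_l in Hy. lra.
Qed.

(* [Phi k r] is int_0^r t * slope_of_sin (k t) dt, computed with the substitution
   k t = sin theta. *)
Definition Psi (t : R) : R := t - sin t * cos t.

Definition Phi (k r : R) : R := / (2 * k ^ 2) * Psi (asin (k * r)).

Lemma Psi_derive (t : R) : is_derive Psi t (2 * sin t ^ 2).
Proof.
  unfold Psi. auto_derive; [trivial|].
  pose proof (sin2_cos2 t) as E. unfold Rsqr in E. nra.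
Qed.

Lemma Psi_le (x y : R) : x <= y -> Psi x <= Psi y.
Proof.
  intros Hxy.
  destruct (MVT_open Psi (fun t => 2 * sin t ^ 2) (x - 1) (y + 1) x y) as [c [_ Hc]];
    try lra.
  - intros t _. apply Psi_derive.
  - assert (0 <= 2 * sin c ^ 2 * (y - x)) by (apply Rmult_le_pos; nra). lra.
Qed.

Lemma asin_le (x y : R) : -1 <= x -> x <= y -> y <= 1 -> asin x <= asin y.
Proof.
  intros Hx Hxy Hy. destruct (Rle_lt_dec (asin x) (asin y)) as [H | H]; trivial.
  pose proof (asin_bound x). pose proof (asin_bound y).
  pose proof (sin_increasing_1 (asin y) (asin x)) as Hs.
  rewrite !sin_asin in Hs by lra. lra.
Qed.

Lemma Phi_0 (k : R) : Phi k 0 = 0.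
Proof. unfold Phi, Psi. rewrite Rmult_0_r, asin_0, sin_0. lra. Qed.

Lemma Phi_le (k x y : R) : 0 < k -> -1 <= k * x -> x <= y -> k * y <= 1 -> Phi k x <= Phi k y.
Proof.
  intros Hk Hx Hxy Hy. unfold Phi.
  apply Rmult_le_compat_l; [left; apply Rinv_0_lt_compat; nra|].
  apply Psi_le, asin_le; nra.
Qed.

Lemma Phi_derive (k r : R) :
  0 < k -> -1 < k * r < 1 -> is_derive (Phi k) r (r * slope_of_sin (k * r)).
Proof.
  intros Hk Hkr.
  assert (Hasin : is_derive asin (k * r) (/ sqrt (1 - (k * r) ^ 2))).
  { apply is_derive_Reals. eapply derive_pt_eq_1.
    rewrite (derive_pt_asin _ Hkr). unfold Rsqr. rewrite Rdiv_1_l. repeat f_equal. ring. }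
  assert (Hlin : is_derive (fun r => k * r) r k) by (auto_derive; [trivial | ring]).
  pose proof (is_derive_comp _ _ r _ _
    (is_derive_comp Psi asin _ _ _ (Psi_derive _) Hasin) Hlin) as D.
  pose proof (is_derive_scal _ r (/ (2 * k ^ 2)) _ D) as D'.
  replace (r * slope_of_sin (k * r)) with
    (/ (2 * k ^ 2) * (k * (/ sqrt (1 - (k * r) ^ 2) * (2 * sin (asin (k * r)) ^ 2)))).
  - exact D'.
  - rewrite sin_asin by lra. unfold slope_of_sin.
    assert (0 < sqrt (1 - (k * r) ^ 2)) by (apply sqrt_lt_R0; nra).
    field. lra.
Qed.

Lemma Psi_asin_cos (g : R) : 0 <= g <= PI -> Psi (asin (cos g)) = PI / 2 - g - cos g * sin g.
Proof.
  intros Hg. rewrite <- sin_shift, asin_sin by lra.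
  unfold Psi. rewrite sin_shift, cos_shift. ring.
Qed.

(* Along a solution, where (sin psi)' = kappa u, this is int_0^r t u'(t) dt. *)
Definition slope_moment (kappa : R) (u du : R -> R) (r : R) : R :=
  r * u r - sin_psi du r / kappa.

Lemma filterlim_slope_moment {T} (F : (T -> Prop) -> Prop) {FF : Filter F}
  (kappa : R) (u du : R -> R) (f : T -> R) (p up c : R) :
  filterlim f F (locally p) -> filterlim (fun x => u (f x)) F (locally up) ->
  filterlim (fun x => sin_psi du (f x)) F (locally c) ->
  filterlim (fun x => slope_moment kappa u du (f x)) F (locally (p * up - c / kappa)).
Proof.
  intros Hp Hu Hs. unfold slope_moment, Rminus, Rdiv.
  apply (filterlim_Rplus F); [now apply (filterlim_Rmult F)|].
  apply (filterlim_comp_ex_derive F _ (fun y => - (y * / kappa))); [exact Hs|].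
  auto_derive. trivial.
Qed.

Section Profile.

Variables (kappa u0 a : R) (u du : R -> R).

Hypothesis kappa_gt0 : 0 < kappa.
Hypothesis u0_gt0 : 0 < u0.
Hypothesis a_gt0 : 0 < a.
Hypothesis u_0 : u 0 = u0.
Hypothesis u_slope_0 : filterlim (fun h => (u h - u 0) / h) (at_right 0) (locally 0).
Hypothesis u_derive : forall r, 0 < r < a -> is_derive u r (du r).
Hypothesis sin_psi_derive : forall r, 0 < r < a -> is_derive (sin_psi du) r (kappa * u r).

Lemma u_lim_0 : filterlim u (at_right 0) (locally u0).
Proof.
  apply (filterlim_ext_loc (fun h => u 0 + h * ((u h - u 0) / h))).
  - apply (at_right_interval 0 1); [lra|]. intros h Hh. field. lra.
  - replace u0 with (u 0 + 0 * 0) by (rewrite u_0; ring).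
    apply (filterlim_Rplus _); [apply filterlim_const|].
    apply (filterlim_Rmult _); [apply filterlim_id_at_right | exact u_slope_0].
Qed.

(* The mean value theorem on [r/2, r] gives a point where u' is a combination of the
   difference quotients of u at 0, and |sin psi| <= |u'|. *)
Lemma Rabs_sin_psi_le r : 0 < r < a -> exists c, 0 < c <= r /\
  Rabs (sin_psi du r) <=
    2 * Rabs ((u r - u 0) / r) + Rabs ((u (r / 2) - u 0) / (r / 2)) + kappa * Rabs (u c) * r.
Proof.
  intros Hr.
  destruct (MVT_open u du 0 a (r / 2) r) as [xi [Hxi Exi]]; try lra; [exact u_derive|].
  destruct (MVT_open (sin_psi du) (fun t => kappa * u t) 0 a xi r) as [c [Hc Ec]];
    try lra; [exact sin_psi_derive|].
  exists c. split; [lra|].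
  assert (Edu : du xi = 2 * ((u r - u 0) / r) - (u (r / 2) - u 0) / (r / 2)).
  { replace (du xi) with ((u r - u (r / 2)) / (r / 2)) by (rewrite Exi; field; lra).
    field. lra. }
  assert (Hxi_le : Rabs (sin_psi du xi)
                   <= 2 * Rabs ((u r - u 0) / r) + Rabs ((u (r / 2) - u 0) / (r / 2))).
  { eapply Rle_trans; [apply Rabs_sin_of_slope_le|]. rewrite Edu.
    eapply Rle_trans; [apply Rabs_triang|].
    rewrite Rabs_Ropp, (Rabs_mult 2), (Rabs_pos_eq 2); lra. }
  replace (sin_psi du r) with (sin_psi du xi + kappa * u c * (r - xi)) by lra.
  eapply Rle_trans; [apply Rabs_triang|].
  rewrite !Rabs_mult, (Rabs_pos_eq kappa), (Rabs_pos_eq (r - xi)) by lra.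
  assert (kappa * Rabs (u c) * (r - xi) <= kappa * Rabs (u c) * r).
  { apply Rmult_le_compat_l; [|lra]. apply Rmult_le_pos; [lra | apply Rabs_pos]. }
  lra.
Qed.

Lemma sin_psi_lim_0 : filterlim (sin_psi du) (at_right 0) (locally 0).
Proof.
  set (q := fun h => (u h - u 0) / h).
  set (M := Rabs u0 + 1).
  set (g := fun r => 2 * Rabs (q r) + Rabs (q (r / 2)) + kappa * M * r).
  assert (Hg : filterlim g (at_right 0) (locally 0)).
  { assert (Hg : filterlim g (at_right 0) (locally (2 * Rabs 0 + Rabs 0 + kappa * M * 0))).
    { apply (filterlim_Rplus _); [apply (filterlim_Rplus _)|].
      - apply (filterlim_Rmult _); [apply filterlim_const|].
        apply filterlim_Rabs_comp, u_slope_0.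
      - apply filterlim_Rabs_comp.
        eapply filterlim_comp; [exact filterlim_half_at_right_0 | exact u_slope_0].
      - apply (filterlim_Rmult _); [apply filterlim_const | apply filterlim_id_at_right]. }
    rewrite Rabs_R0 in Hg. replace (2 * 0 + 0 + kappa * M * 0) with 0 in Hg by ring.
    exact Hg. }
  destruct (proj1 (filterlim_locally u u0) u_lim_0 (mkposreal 1 Rlt_0_1)) as [d Hd].
  apply (filterlim_le_le (fun r => - g r) _ g (Finite 0)).
  - apply (at_right_interval 0 (Rmin d a)); [destruct d; apply Rmin_pos; simpl; lra|].
    intros r Hr. pose proof (Rmin_l d a). pose proof (Rmin_r d a).
    destruct (Rabs_sin_psi_le r) as [c [Hc Hs]]; [lra|].
    assert (Huc : Rabs (u c - u0) < 1).
    { apply (Hd c); [|lra]. change (Rabs (c - 0) < d). rewrite Rminus_0_r, Rabs_pos_eq; lra. }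
    assert (Rabs (u c) <= M).
    { unfold M. replace (u c) with ((u c - u0) + u0) by ring.
      eapply Rle_trans; [apply Rabs_triang | lra]. }
    assert (kappa * Rabs (u c) * r <= kappa * M * r).
    { apply Rmult_le_compat_r; [lra|]. apply Rmult_le_compat_l; lra. }
    apply Rabs_le_between. unfold g, q. lra.
  - pose proof (filterlim_comp_ex_derive _ g Ropp 0 Hg) as Hn. rewrite Ropp_0 in Hn.
    apply Hn. auto_derive. trivial.
  - exact Hg.
Qed.

Lemma energy_derive r : 0 < r < a ->
  is_derive (fun r => sqrt (1 - sin_psi du r ^ 2) + kappa / 2 * u r ^ 2) r 0.
Proof.
  intros Hr.
  assert (Hcos : is_derive (fun y => sqrt (1 - y ^ 2)) (sin_psi du r) (- du r)).
  { pose proof (sin_of_slope_bound (du r)).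
    rewrite <- (slope_of_sin_of_slope (du r)). unfold slope_of_sin.
    change (sin_psi du r) with (sin_of_slope (du r)).
    set (x := sin_of_slope (du r)) in *.
    assert (0 < sqrt (1 - x ^ 2)) by (apply sqrt_lt_R0; nra).
    auto_derive; [nra|]. replace (1 + - (x * (x * 1))) with (1 - x ^ 2) by ring. field. lra. }
  assert (Hsqr : is_derive (fun y => kappa / 2 * y ^ 2) (u r) (kappa * u r))
    by (auto_derive; [trivial | field]).
  pose proof (is_derive_plus _ _ _ _ _
    (is_derive_comp _ _ _ _ _ Hcos (sin_psi_derive r Hr))
    (is_derive_comp _ _ _ _ _ Hsqr (u_derive r Hr))) as D.
  replace 0 with (plus (scal (kappa * u r) (- du r)) (scal (du r) (kappa * u r)))
    by (unfold plus, scal; simpl; unfold mult; simpl; ring).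
  exact D.
Qed.

Lemma energy_eq r : 0 < r < a ->
  sqrt (1 - sin_psi du r ^ 2) + kappa / 2 * u r ^ 2 = 1 + kappa / 2 * u0 ^ 2.
Proof.
  apply (derive_zero_eq_lim_right
    (fun r => sqrt (1 - sin_psi du r ^ 2) + kappa / 2 * u r ^ 2) 0 a _ energy_derive).
  replace (1 + kappa / 2 * u0 ^ 2) with (sqrt (1 - 0 ^ 2) + kappa / 2 * u0 ^ 2)
    by (rewrite pow_i, Rminus_0_r, sqrt_1 by auto; reflexivity).
  apply (filterlim_Rplus _).
  - apply (filterlim_comp_ex_derive _ _ (fun y => sqrt (1 - y ^ 2))); [exact sin_psi_lim_0|].
    auto_derive. lra.
  - apply (filterlim_comp_ex_derive _ _ (fun y => kappa / 2 * y ^ 2)); [exact u_lim_0|].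
    auto_derive. trivial.
Qed.

Lemma u0_sqr_le r : 0 < r < a -> u0 ^ 2 <= u r ^ 2.
Proof.
  intros Hr. pose proof (energy_eq r Hr) as E.
  assert (sqrt (1 - sin_psi du r ^ 2) <= 1).
  { rewrite <- sqrt_1 at 2. apply sqrt_le_1_alt. nra. }
  apply (Rmult_le_reg_l (kappa / 2)); lra.
Qed.

Lemma u_pos r : 0 < r < a -> 0 < u r.
Proof.
  intros Hr.
  assert (Hne : u r <> 0).
  { intros E. pose proof (u0_sqr_le r Hr) as Hsq. rewrite E, pow_i in Hsq by auto. nra. }
  destruct (Rlt_or_le 0 (u r)) as [H | H]; [exact H | exfalso].
  assert (Hu : at_right 0 (fun e => 0 < u e /\ 0 < e < r)).
  { apply filter_and; [|apply (at_right_interval 0 r); [lra | intros; lra]].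
    destruct (proj1 (filterlim_locally u u0) u_lim_0 (mkposreal (u0 / 2) ltac:(lra))) as [d Hd].
    exists d. intros e He He0. specialize (Hd e He He0).
    change (Rabs (u e - u0) < u0 / 2) in Hd. apply Rabs_def2 in Hd. lra. }
  destruct (filter_ex _ Hu) as [e [Hue He]].
  destruct (Ranalysis5.IVT_interv (fun t => - u t) e r) as [z [Hz Euz]]; try lra.
  - intros t Ht. apply continuity_pt_opp, continuity_pt_filterlim.
    apply (@ex_derive_continuous R_AbsRing R_NormedModule).
    exists (du t). apply u_derive. lra.
  - pose proof (u0_sqr_le z ltac:(lra)). replace (u z) with 0 in * by lra. nra.
Qed.

Lemma sin_psi_lt x y : 0 < x -> x < y -> y < a -> sin_psi du x < sin_psi du y.
Proof.
  apply (derive_pos_lt _ (fun t => kappa * u t) 0 a sin_psi_derive).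
  intros t Ht. apply Rmult_lt_0_compat; [lra | exact (u_pos t Ht)].
Qed.

Lemma sin_psi_pos r : 0 < r < a -> 0 < sin_psi du r.
Proof.
  intros Hr.
  assert (0 <= sin_psi du (r / 2)).
  { apply (filterlim_le_const _ _ _ _ sin_psi_lim_0).
    apply (at_right_interval 0 (r / 2)); [lra|]. intros x Hx. left. apply sin_psi_lt; lra. }
  pose proof (sin_psi_lt (r / 2) r). lra.
Qed.

Lemma du_pos r : 0 < r < a -> 0 < du r.
Proof. intros Hr. apply sin_of_slope_pos, (sin_psi_pos r Hr). Qed.

Lemma u_lt x y : 0 < x -> x < y -> y < a -> u x < u y.
Proof. exact (derive_pos_lt u du 0 a u_derive du_pos x y). Qed.

Lemma u_le x y : 0 < x -> x <= y -> y < a -> u x <= u y.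
Proof.
  intros Hx [Hxy | ->] Hy; [left; exact (u_lt x y Hx Hxy Hy) | right; reflexivity].
Qed.

Lemma sin_psi_increment_bounds x y : 0 < x -> x <= y -> y < a ->
  kappa * u x * (y - x) <= sin_psi du y - sin_psi du x <= kappa * u y * (y - x).
Proof.
  intros Hx Hxy Hy.
  destruct (MVT_open (sin_psi du) (fun t => kappa * u t) 0 a x y) as [c [Hc ->]];
    try lra; [exact sin_psi_derive|].
  pose proof (u_le x c ltac:(lra) ltac:(lra) ltac:(lra)).
  pose proof (u_le c y ltac:(lra) ltac:(lra) ltac:(lra)).
  split; apply Rmult_le_compat_r; try apply Rmult_le_compat_l; lra.
Qed.

Lemma sin_psi_lt_kappa_u_mul r : 0 < r < a -> sin_psi du r < kappa * u r * r.
Proof.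
  intros Hr.
  assert (Hhalf : sin_psi du (r / 2) - kappa * u (r / 2) * (r / 2) <= 0).
  { apply (filterlim_const_le _ _ _ _ sin_psi_lim_0).
    apply (at_right_interval 0 (r / 2)); [lra|]. intros x Hx.
    pose proof (sin_psi_increment_bounds x (r / 2) ltac:(lra) ltac:(lra) ltac:(lra)).
    assert (0 <= kappa * u (r / 2) * x)
      by (apply Rmult_le_pos; [apply Rmult_le_pos; [lra | left; apply u_pos] |]; lra).
    lra. }
  pose proof (sin_psi_increment_bounds (r / 2) r ltac:(lra) ltac:(lra) ltac:(lra)).
  assert (kappa * u (r / 2) < kappa * u r) by (apply Rmult_lt_compat_l; [|apply u_lt]; lra).
  nra.
Qed.

Lemma slope_moment_lim_0 : filterlim (slope_moment kappa u du) (at_right 0) (locally 0).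
Proof.
  pose proof (filterlim_slope_moment _ kappa u du (fun r => r) 0 u0 0
    (filterlim_id_at_right 0) u_lim_0 sin_psi_lim_0) as H.
  replace (0 * u0 - 0 / kappa) with 0 in H by (field; lra).
  exact H.
Qed.

Lemma slope_moment_derive r : 0 < r < a -> is_derive (slope_moment kappa u du) r (r * du r).
Proof.
  intros Hr.
  assert (Did : is_derive (fun x => x) r 1) by (auto_derive; [trivial | ring]).
  pose proof (is_derive_minus _ _ r _ _
    (is_derive_mult (fun x => x) u r _ _ Did (u_derive r Hr) Rmult_comm)
    (is_derive_scal _ r (/ kappa) _ (sin_psi_derive r Hr))) as D.
  replace (r * du r)
    with (minus (plus (mult 1 (u r)) (mult r (du r))) (/ kappa * (kappa * u r)))
    by (unfold minus, plus, opp, mult; simpl; field; lra).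
  eapply is_derive_ext; [|exact D].
  intros t. unfold slope_moment, minus, plus, opp, mult; simpl. field. lra.
Qed.

Section OuterContact.

Variable c : R.
Hypothesis sin_psi_lim_a : filterlim (sin_psi du) (at_left a) (locally c).

Lemma sin_psi_below_chord r : 0 < r < a -> sin_psi du r * a < r * c.
Proof.
  intros Hr. set (m := kappa * u r).
  assert (Hlim : filterlim (fun y => sin_psi du y - m * y) (at_left a) (locally (c - m * a))).
  { apply (filterlim_Rplus _); [exact sin_psi_lim_a|].
    apply (filterlim_comp_ex_derive _ _ (fun y => - (m * y)) _ (filterlim_id_at_left a)).
    auto_derive. trivial. }
  assert (Hgap : sin_psi du r - m * r <= c - m * a).
  { apply (filterlim_const_le _ _ _ _ Hlim).
    apply (at_left_interval r a); [lra|]. intros y Hy.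
    pose proof (sin_psi_increment_bounds r y ltac:(lra) ltac:(lra) ltac:(lra)). unfold m. lra. }
  pose proof (sin_psi_lt_kappa_u_mul r Hr) as Hlt. fold m in Hlt.
  assert (sin_psi du r * (a - r) < m * r * (a - r)) by (apply Rmult_lt_compat_r; lra).
  nra.
Qed.

Lemma sin_psi_lim_a_bounds : 0 < c <= 1.
Proof.
  split.
  - pose proof (sin_psi_below_chord (a / 2) ltac:(lra)).
    pose proof (sin_psi_pos (a / 2) ltac:(lra)). nra.
  - apply (filterlim_le_const _ _ _ _ sin_psi_lim_a).
    apply (at_left_interval 0 a); [lra|]. intros r _.
    left. apply (sin_of_slope_bound (du r)).
Qed.

Lemma du_lt_slope_of_sin r : 0 < r < a -> du r < slope_of_sin (c / a * r).
Proof.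
  intros Hr. pose proof sin_psi_lim_a_bounds. pose proof (sin_psi_pos r Hr).
  pose proof (sin_psi_below_chord r Hr).
  assert (c / a * r < c) by (apply (Rmult_lt_reg_r a); [lra|]; field_simplify; nra).
  apply lt_slope_of_sin.
  - assert (0 < c / a * r) by (apply Rmult_lt_0_compat; [apply Rdiv_lt_0_compat |]; lra).
    lra.
  - change (sin_of_slope (du r)) with (sin_psi du r).
    apply (Rmult_lt_reg_r a); [lra|]. field_simplify; lra.
Qed.

Lemma slope_moment_sub_Phi_lt x y : 0 < x -> x < y -> y < a ->
  slope_moment kappa u du y - Phi (c / a) y < slope_moment kappa u du x - Phi (c / a) x.
Proof.
  intros Hx Hxy Hy. pose proof sin_psi_lim_a_bounds as Hc.
  set (k := c / a). assert (Hk : 0 < k) by (apply Rdiv_lt_0_compat; lra).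
  enough (Phi k x - slope_moment kappa u du x < Phi k y - slope_moment kappa u du y) by lra.
  apply (derive_pos_lt (fun t => Phi k t - slope_moment kappa u du t)
    (fun t => t * slope_of_sin (k * t) - t * du t) 0 a); try lra.
  - intros t Ht. apply (is_derive_minus (Phi k) (slope_moment kappa u du));
      [|exact (slope_moment_derive t Ht)].
    apply Phi_derive; [exact Hk|].
    assert (k * t < k * a) by (apply Rmult_lt_compat_l; lra).
    replace (k * a) with c in * by (unfold k; field; lra).
    split; nra.
  - intros t Ht. pose proof (du_lt_slope_of_sin t Ht) as Hd. fold k in Hd. nra.
Qed.

End OuterContact.
End Profile.

Theorem mainTheorem11 (kappa u0 a gamma : R) (u du : R -> R) :
  0 < kappa -> 0 < u0 -> 0 < a -> 0 <= gamma < PI / 2 ->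
  (* initial conditions u(0) = u0, u'(0) = 0 (one-sided derivative at 0) *)
  u 0 = u0 ->
  filterlim (fun h => (u h - u 0) / h) (at_right 0) (locally 0) ->
  (* u is differentiable on (0,a) with derivative du, and solves the ODE *)
  (forall r, 0 < r < a -> is_derive u r (du r)) ->
  (forall r, 0 < r < a -> is_derive (sin_psi du) r (kappa * u r)) ->
  (* u(a) is the outer height: u is continuous from the left at a *)
  filterlim u (at_left a) (locally (u a)) ->
  (* sin psi extends continuously to r = a with value cos gamma *)
  filterlim (sin_psi du) (at_left a) (locally (cos gamma)) ->
  u a < cos gamma / (kappa * a) - a / 2 * tan gamma
        + a / (2 * cos gamma ^ 2) * (PI / 2 - gamma).
Proof.
  intros Hkappa Hu0 Ha Hgamma Hu_0 Hslope Hdu Hds Hua Hsa.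
  assert (Hcos : 0 < cos gamma <= 1) by (split; [apply cos_gt_0 | apply COS_bound]; lra).
  set (k := cos gamma / a).
  assert (Hk : 0 < k) by (apply Rdiv_lt_0_compat; lra).
  assert (Hka : k * a = cos gamma) by (unfold k; field; lra).
  assert (Hlt : a * u a - cos gamma / kappa - Phi k a < 0 - Phi k 0).
  { apply (strict_decreasing_sub_limits_lt (slope_moment kappa u du) (Phi k) 0 a);
      [exact Ha | | | |].
    - exact (slope_moment_sub_Phi_lt _ _ _ _ _ Hkappa Hu0 Ha Hu_0 Hslope Hdu Hds _ Hsa).
    - intros r Hr. split; apply Phi_le; nra.
    - exact (slope_moment_lim_0 _ _ _ _ _ Hkappa Ha Hu_0 Hslope Hdu Hds).
    - exact (filterlim_slope_moment _ kappa u du (fun r => r) _ _ _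
               (filterlim_id_at_left a) Hua Hsa). }
  unfold Phi at 1 in Hlt. rewrite Hka, Psi_asin_cos, Phi_0 in Hlt by lra.
  apply (Rmult_lt_reg_r a); [exact Ha|].
  replace ((cos gamma / (kappa * a) - a / 2 * tan gamma
            + a / (2 * cos gamma ^ 2) * (PI / 2 - gamma)) * a)
    with (cos gamma / kappa + / (2 * k ^ 2) * (PI / 2 - gamma - cos gamma * sin gamma))
    by (unfold k, tan; field; lra).
  lra.
Qed.
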